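(* Let $A$ be a unique factorization domain and $R$ a subring of $A$ whose group of units equals that of $A$. Then $\operatorname{Irr}R\subset\operatorname{Irr}A$ if and only if $R$ is factorially closed in $A$, i.e. for all $x,y\in A$, $xy\in R\setminus\{0\}$ implies $x,y\in R$.
   Context: $\operatorname{Irr}R$ denotes the set of irreducible elements of a ring $R$. *)

From HB Require Import structures.
From mathcomp Require Import all_boot all_order all_algebra.
Set Implicit Arguments. Unset Strict Implicit. Unset Printing Implicit Defensive.
Import GRing.Theory.
Local Open Scope ring_scope.

Section Defs.
Variable A : idomainType.

Definition sunit (S : {pred A}) (x : A) : Prop :=
  x \in S /\ exists y, y \in S /\ x * y = 1.

Definition sirr (S : {pred A}) (x : A) : Prop :=
  [/\ x \in S, x != 0, ~ sunit S x &
      forall a b, a \in S -> b \in S -> x = a * b -> sunit S a \/ sunit S b].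

Definition irr (x : A) : Prop := sirr predT x.

Definition associated (a b : A) : Prop :=
  exists u, u \is a GRing.unit /\ a = u * b.

Definition is_UFD : Prop :=
  (forall x : A, x != 0 -> x \isn't a GRing.unit ->
     exists s : seq A, (forall p, p \in s -> irr p) /\ x = \prod_(p <- s) p)
  /\
  (forall s t : seq A, (forall p, p \in s -> irr p) -> (forall p, p \in t -> irr p) ->
     \prod_(p <- s) p = \prod_(p <- t) p ->
     size s = size t /\
     exists f : 'I_(size s) -> 'I_(size t),
       injective f /\ forall i : 'I_(size s), associated (nth 0 s i) (nth 0 t (f i))).

Definition is_subring (S : {pred A}) : Prop :=
  [/\ 1 \in S, {in S &, forall x y, x - y \in S} & {in S &, forall x y, x * y \in S}].

Definition fact_closed (S : {pred A}) : Prop :=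
  forall x y : A, x * y \in S -> x * y != 0 -> x \in S /\ y \in S.

End Defs.

From HB Require Import structures.
From mathcomp Require Import all_boot all_order all_algebra.
From mathcomp Require Import ring zify.
From Stdlib Require Import Classical.
Set Implicit Arguments. Unset Strict Implicit. Unset Printing Implicit Defensive.
Import GRing.Theory.
Local Open Scope ring_scope.

(* Since R and A have the same units, irreducibility in R and in A differ
   only in which factorisations are admitted. If R is factorially closed,
   every factorisation in A of an element of R is one in R, so Irr R is contained in Irr A. Conversely, if Irr R is
   contained in Irr A, factor a nonzero x * y in R as a unit times a product of
   R-irreducibles p_1 ... p_n (such a factorisation exists because an
   R-factorisation into non-units shortens the A-factorisation of each factor).
   The p_i are irreducible, hence prime, in the factorial ring A; peeling them
   off one at a time from x * y shows that x is a unit times a product of some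
   of the p_i, hence lies in R. *)

Section UFD.
Variable A : idomainType.

Lemma sunit_predT (x : A) : sunit predT x <-> x \is a GRing.unit.
Proof.
split; first by move=> [_ [y [_ xy1]]]; apply/unitrP; exists y; rewrite mulrC.
by move=> ux; split=> //; exists x^-1; split=> //; apply: mulrV.
Qed.

Lemma unit_neq0 (k : A) : k \is a GRing.unit -> k != 0.
Proof. by apply: contraTneq => ->; rewrite unitr0. Qed.

Lemma irrMu (p k : A) : irr p -> k \is a GRing.unit -> irr (p * k).
Proof.
move=> [_ p0 pNu p_irr] uk; split=> //.
- by rewrite mulf_neq0 // unit_neq0.
- by move/sunit_predT; rewrite unitrM uk andbT => /sunit_predT.
move=> a b _ _ pk_ab.
have /(p_irr _ _ isT isT) [|ubk] : p = a * (b * k^-1) by rewrite mulrA -pk_ab mulrK.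
  by left.
by right; move/sunit_predT: ubk; rewrite unitrM => /andP[ub _]; apply/sunit_predT.
Qed.

Lemma dvd_prod_mem (s : seq A) q : q \in s -> exists r, \prod_(p <- s) p = q * r.
Proof. by move=> qs; exists (\prod_(p <- rem q s) p); rewrite (big_rem q qs). Qed.

Hypothesis ufdA : is_UFD A.

Lemma UFD_factor (z : A) : z != 0 ->
  exists c s, [/\ c \is a GRing.unit, (forall p, p \in s -> irr p) &
     z = c * \prod_(p <- s) p].
Proof.
move=> z0; have [uz|Nuz] := boolP (z \is a GRing.unit).
  by exists z, [::]; split=> //; rewrite big_nil mulr1.
have [s [s_irr ->]] := ufdA.1 z z0 Nuz.
by exists 1, s; rewrite mul1r unitr1.
Qed.

(* Uniqueness of factorisations, applied to the factorisation of p * k that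
   starts with (a unit multiple of) p. *)
Lemma irr_assoc_factor (p k c : A) (s : seq A) :
  irr p -> k != 0 -> c \is a GRing.unit -> (forall q, q \in s -> irr q) ->
  p * k = c * \prod_(q <- s) q -> exists2 q, q \in s & exists r, q = p * r.
Proof.
move=> irr_p k0 uc s_irr pk_cs.
have [ck [sk [uck sk_irr k_eq]]] := UFD_factor k0.
set d := ck / c.
have ud : d \is a GRing.unit by rewrite unitrM uck unitrV.
have eq_prod : \prod_(q <- p * d :: sk) q = \prod_(q <- s) q.
  have cd : c * d = ck by rewrite mulrC divrK.
  by apply: (mulfI (unit_neq0 uc)); rewrite big_cons -pk_cs k_eq -cd; ring.
have pds_irr q : q \in p * d :: sk -> irr q.
  by rewrite inE => /orP[/eqP ->|/sk_irr //]; apply: irrMu.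
have [_ [f [_ f_assoc]]] := ufdA.2 _ _ pds_irr s_irr eq_prod.
set i0 := Ordinal (ltn0Sn (size sk)).
have [w [uw /= pd_wq]] := f_assoc i0.
exists (nth 0 s (f i0)); first exact/mem_nth/ltn_ord.
by exists (d / w); rewrite mulrA pd_wq mulrC mulKr.
Qed.

Lemma irr_prime (p a b k : A) : irr p -> a * b = p * k ->
  (exists r, a = p * r) \/ (exists r, b = p * r).
Proof.
move=> irr_p ab_pk.
have [->|a0] := eqVneq a 0; first by left; exists 0; rewrite mulr0.
have [->|b0] := eqVneq b 0; first by right; exists 0; rewrite mulr0.
have k0 : k != 0 by apply: contra_neq (mulf_neq0 a0 b0); rewrite ab_pk => ->; rewrite mulr0.
have [ca [sa [uca sa_irr a_eq]]] := UFD_factor a0.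
have [cb [sb [ucb sb_irr b_eq]]] := UFD_factor b0.
have ucab : ca * cb \is a GRing.unit by rewrite unitrM uca ucb.
have sab_irr q : q \in sa ++ sb -> irr q by rewrite mem_cat => /orP[/sa_irr|/sb_irr].
have pk_eq : p * k = ca * cb * \prod_(q <- sa ++ sb) q.
  by rewrite -ab_pk a_eq b_eq big_cat /=; ring.
have [q] := irr_assoc_factor irr_p k0 ucab sab_irr pk_eq.
rewrite mem_cat => /orP[/dvd_prod_mem [r sa_qr]|/dvd_prod_mem [r sb_qr]] [r' q_pr].
  by left; exists (r' * r * ca); rewrite a_eq sa_qr q_pr; ring.
by right; exists (r' * r * cb); rewrite b_eq sb_qr q_pr; ring.
Qed.

Section Subring.
Variable R : {pred A}.
Hypothesis subR : is_subring R.
Hypothesis unitR : forall u : A, sunit R u <-> u \is a GRing.unit.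

Lemma sirrN_split (z : A) : z \in R -> z != 0 -> z \isn't a GRing.unit -> ~ sirr R z ->
  exists a b, [/\ a \in R, b \in R, z = a * b,
                  a \isn't a GRing.unit & b \isn't a GRing.unit].
Proof.
move=> zR z0 Nuz Nirr_z; apply: NNPP => no_split; apply: Nirr_z.
split=> // [/unitR uz|a b aR bR z_ab]; first by rewrite uz in Nuz.
have [ua|Nua] := boolP (a \is a GRing.unit); first by left; apply/unitR.
have [ub|Nub] := boolP (b \is a GRing.unit); first by right; apply/unitR.
by case: no_split; exists a, b.
Qed.

Lemma subring_factor (z : A) : z \in R -> z != 0 ->
  exists c t, [/\ c \is a GRing.unit, (forall p, p \in t -> sirr R p) &
     z = c * \prod_(p <- t) p].
Proof.
move=> zR z0; have [uz|Nuz] := boolP (z \is a GRing.unit).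
  by exists z, [::]; split=> //; rewrite big_nil mulr1.
have [s [s_irr z_eq]] := ufdA.1 z z0 Nuz.
have [n size_s_lt] : exists n, (size s < n)%N by exists (size s).+1.
elim: n z zR z0 Nuz s s_irr z_eq size_s_lt => // n IHn z zR z0 Nuz s s_irr z_eq size_s_lt.
have [irr_z|Nirr_z] := classic (sirr R z).
  exists 1, [:: z]; rewrite big_seq1 mul1r unitr1.
  by split=> // p; rewrite inE => /eqP ->.
have [a [b [aR bR z_ab Nua Nub]]] := sirrN_split zR z0 Nuz Nirr_z.
have [a0 b0] : a != 0 /\ b != 0.
  by apply/andP; rewrite -negb_or -mulf_eq0 -z_ab.
have [sa [sa_irr a_eq]] := ufdA.1 a a0 Nua.
have [sb [sb_irr b_eq]] := ufdA.1 b b0 Nub.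
have sab_irr q : q \in sa ++ sb -> irr q by rewrite mem_cat => /orP[/sa_irr|/sb_irr].
have prod_eq : \prod_(p <- s) p = \prod_(p <- sa ++ sb) p.
  by rewrite big_cat /= -a_eq -b_eq -z_ab -z_eq.
have [size_s _] := ufdA.2 _ _ s_irr sab_irr prod_eq.
have [sa_gt0 sb_gt0] : (0 < size sa)%N /\ (0 < size sb)%N.
  rewrite !lt0n !size_eq0; split.
    by apply: contraNneq Nua; rewrite a_eq => ->; rewrite big_nil unitr1.
  by apply: contraNneq Nub; rewrite b_eq => ->; rewrite big_nil unitr1.
rewrite size_cat in size_s.
have [ca [ta [uca ta_irr a_cta]]] := IHn a aR a0 Nua sa sa_irr a_eq ltac:(lia).
have [cb [tb [ucb tb_irr b_ctb]]] := IHn b bR b0 Nub sb sb_irr b_eq ltac:(lia).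
exists (ca * cb), (ta ++ tb); split.
- by rewrite unitrM uca ucb.
- by move=> q; rewrite mem_cat => /orP[/ta_irr|/tb_irr].
by rewrite z_ab a_cta b_ctb big_cat /=; ring.
Qed.

Lemma mem_dvd_prod_irr (s : seq A) : (forall p, p \in s -> p \in R /\ irr p) ->
  forall c x y, c \is a GRing.unit -> x * y = c * \prod_(p <- s) p -> x \in R.
Proof.
case: subR => _ _ mulR.
elim: s => [|p s IHs] s_irr c x y uc.
  rewrite big_nil mulr1 => xy_c.
  have : x * y \is a GRing.unit by rewrite xy_c.
  by rewrite unitrM => /andP[/unitR [] ].
have [pR irr_p] := s_irr p (mem_head p s).
have {}s_irr q : q \in s -> q \in R /\ irr q by move=> qs; apply: s_irr; rewrite inE qs orbT.
have p0 : p != 0 by case: irr_p.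
rewrite big_cons mulrCA => xy_pcs.
have [[r x_pr]|[r y_pr]] := irr_prime irr_p xy_pcs.
  rewrite x_pr mulR // (IHs s_irr c r y) //.
  by apply: (mulfI p0); rewrite mulrA -x_pr.
apply: (IHs s_irr c x r) => //.
by apply: (mulfI p0); rewrite mulrCA -y_pr.
Qed.

End Subring.
End UFD.

Theorem lemma3p2 (A : idomainType) (R : {pred A}) :
  is_UFD A -> is_subring R ->
  (forall u : A, sunit R u <-> u \is a GRing.unit) ->
  ((forall x : A, sirr R x -> irr x) <-> fact_closed R).
Proof.
move=> ufdA subR unitR; split.
  move=> irrRA x y xyR xy0.
  have [c [t [uc t_irr xy_eq]]] := subring_factor ufdA unitR xyR xy0.
  have {}t_irr p : p \in t -> p \in R /\ irr p.
    by move=> /t_irr irr_p; split; [case: irr_p | apply: irrRA].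
  split; first exact: (mem_dvd_prod_irr ufdA subR unitR t_irr uc xy_eq).
  by apply: (mem_dvd_prod_irr ufdA subR unitR t_irr uc (y := x)); rewrite mulrC.
move=> fcR x [xR x0 Nux x_irr]; split=> //; first by move/sunit_predT/unitR.
move=> a b _ _ x_ab.
have [aR bR] : a \in R /\ b \in R by apply: fcR; rewrite -x_ab.
by case: (x_irr a b aR bR x_ab) => /unitR /sunit_predT; [left|right].
Qed.
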